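(* Let $f:\{0,1\}^n\to\{0,1\}$ be a non-constant total symmetric Boolean function and let $t_f$ be as defined in the context. Then \[ \lambda(f) \ge \sqrt{t_f\,(n+1-t_f)}, \] and consequently $\lambda(f) = \Omega(\sqrt{t_f\cdot n})$.
   Context: A Boolean function $f:\{0,1\}^n\to\{0,1\}$ is symmetric if $f(x)$ depends only on the Hamming weight $|x|$ (number of ones). For such $f$, $t_f$ is the minimum nonnegative integer $t$ such that $f$ is constant on all inputs $x$ with $t\le |x|\le n-t$ (the condition being vacuous if this range is empty). The sensitivity graph of $f$ has vertex set $\{0,1\}^n$, with $x,y$ adjacent iff they differ in exactly one coordinate and $f(x)\neq f(y)$; $A_f$ is its adjacency matrix, and the spectral sensitivity is $\lambda(f)=\|A_f\|$, the spectral norm of $A_f$. *)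

From HB Require Import structures.
From mathcomp Require Import all_boot all_order all_algebra.
From mathcomp Require Import boolp classical_sets reals.
Set Implicit Arguments. Unset Strict Implicit. Unset Printing Implicit Defensive.
Import Order.TTheory GRing.Theory Num.Theory.
Local Open Scope ring_scope.

Definition cube (n : nat) := {ffun 'I_n -> bool}.

Definition hw (n : nat) (x : cube n) : nat := #|[set i | x i]|.

Definition hdist (n : nat) (x y : cube n) : nat := #|[set i | x i != y i]|.

Definition symmetric_fun (n : nat) (f : cube n -> bool) : Prop :=
  forall x y : cube n, hw x = hw y -> f x = f y.

Definition constant_fun (n : nat) (f : cube n -> bool) : Prop :=
  forall x y : cube n, f x = f y.

Definition const_on_middle (n : nat) (f : cube n -> bool) (t : nat) : bool :=
  [forall x : cube n, forall y : cube n,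
    ((t <= hw x <= n - t) && (t <= hw y <= n - t))%N ==> (f x == f y)].

Lemma const_on_middle_ex (n : nat) (f : cube n -> bool) :
  exists t, const_on_middle f t.
Proof.
exists n.+1; apply/forallP => x; apply/forallP => y; apply/implyP.
move=> /andP[/andP[h1 h2] _].
have h3 : (n - n.+1 = 0)%N by apply/eqP; rewrite subn_eq0.
by move: h2; rewrite h3 leqn0 => /eqP h4; rewrite h4 in h1.
Qed.

Definition t_f (n : nat) (f : cube n -> bool) : nat :=
  ex_minn (const_on_middle_ex f).

Definition sens_adj (R : pzRingType) (n : nat) (f : cube n -> bool)
    (x y : cube n) : R :=
  if (hdist x y == 1)%N && (f x != f y) then 1 else 0.

Definition spectral_norm (R : realType) (T : finType) (A : T -> T -> R) : R :=
  sup [set r : R | exists v : T -> R,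
         \sum_(y : T) v y ^+ 2 = 1 /\
         r = Num.sqrt (\sum_(x : T) (\sum_(y : T) A x y * v y) ^+ 2)].

Definition spec_sens (R : realType) (n : nat) (f : cube n -> bool) : R :=
  spectral_norm (@sens_adj R n f).

(* Since f is symmetric and non-constant, minimality of t_f forces f to
   change value between two consecutive Hamming layers s-1 and s with
   s = t_f or s = n+1-t_f.  Between these layers every edge of the cube is
   sensitive: a vertex of weight s-1 has n-s+1 neighbours of weight s and a
   vertex of weight s has s neighbours of weight s-1.  The sensitivity graph
   thus contains a biregular bipartite graph with degrees n-s+1 and s, whose
   norm sqrt((n-s+1) s) = sqrt(t_f (n+1-t_f)) is attained by the vector equal
   to sqrt(n-s+1) on layer s-1 and to sqrt(s) on layer s. *)

From mathcomp Require Import all_boot all_order all_algebra.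
From mathcomp Require Import classical_sets reals.
From mathcomp Require Import lra zify.
Import Order.TTheory GRing.Theory Num.Theory.
Local Open Scope ring_scope.

Section SpectralNorm.
Variables (R : realType) (T : finType) (A : T -> T -> R).

Lemma sqr_le1_of_sum_sqr1 (w : T -> R) y : \sum_z w z ^+ 2 = 1 -> `|w y| <= 1.
Proof.
move=> w1; have : w y ^+ 2 <= 1.
  by rewrite -w1 (bigD1 y) //= lerDl sumr_ge0 // => z _; rewrite sqr_ge0.
rewrite -(real_normK (num_real _)) => h.
have := normr_ge0 (w y); nra.
Qed.

Lemma spectral_norm_set_bounded :
  has_ubound [set r : R | exists v : T -> R, \sum_y v y ^+ 2 = 1 /\
                 r = Num.sqrt (\sum_x (\sum_y A x y * v y) ^+ 2)].
Proof.
exists (Num.sqrt (\sum_x (\sum_y `|A x y|) ^+ 2)) => r [w [w1 ->]].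
rewrite ler_sqrt; last by apply: sumr_ge0 => x _; rewrite sqr_ge0.
apply: ler_sum => x _; rewrite -(real_normK (num_real _)).
rewrite lerXn2r ?nnegrE ?sumr_ge0 //.
apply: (le_trans (ler_norm_sum _ _ _)); apply: ler_sum => y _.
by rewrite normrM ler_piMr // sqr_le1_of_sum_sqr1.
Qed.

Lemma spectral_norm_ge (v : T -> R) (c : R) :
  0 <= c -> 0 < \sum_y v y ^+ 2 ->
  c ^+ 2 * \sum_y v y ^+ 2 <= \sum_x (\sum_y A x y * v y) ^+ 2 ->
  c <= spectral_norm A.
Proof.
move=> c_ge0; set S := \sum_y v y ^+ 2 => S_gt0 hc.
have sqrtS_gt0 : 0 < Num.sqrt S by rewrite sqrtr_gt0.
pose u y := v y / Num.sqrt S.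
have u_unit : \sum_y u y ^+ 2 = 1.
  under eq_bigr do rewrite expr_div_n.
  by rewrite -mulr_suml sqr_sqrtr ?(ltW S_gt0) // divff // gt_eqF.
have Au : \sum_x (\sum_y A x y * u y) ^+ 2 = (\sum_x (\sum_y A x y * v y) ^+ 2) / S.
  rewrite mulr_suml; apply: eq_bigr => x _.
  under eq_bigr do rewrite mulrA.
  by rewrite -mulr_suml expr_div_n sqr_sqrtr // ltW.
apply: (le_trans _ (ub_le_sup spectral_norm_set_bounded _)); last by exists u.
rewrite -(ger0_norm c_ge0) -sqrtr_sqr ler_sqrt; last first.
  by apply: sumr_ge0 => x _; rewrite sqr_ge0.
by rewrite Au ler_pdivlMr // normrX ger0_norm.
Qed.

End SpectralNorm.

Definition flip {n} (x : cube n) (i : 'I_n) : cube n :=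
  [ffun j => if j == i then ~~ x j else x j].

Lemma flip_inj {n} (x : cube n) : injective (flip x).
Proof.
move=> i j /(congr1 (fun y : cube n => y i)); rewrite !ffunE eqxx.
by case: eqP => // _; case: (x i).
Qed.

Lemma hw_flip {n} (x : cube n) i :
  hw (flip x i) = if x i then (hw x).-1 else (hw x).+1.
Proof.
rewrite /hw; case: ifP => xi.
  have -> : [set j | flip x i j] = [set j | x j] :\ i.
    by apply/setP => j; rewrite !inE ffunE; case: eqP => [->|]; rewrite ?xi ?andbT.
  by rewrite (cardsD1 i [set j | x j]) inE xi.
have -> : [set j | flip x i j] = i |: [set j | x j].
  by apply/setP => j; rewrite !inE ffunE; case: eqP => [->|] //=; rewrite xi.
by rewrite cardsU1 inE xi.
Qed.

Lemma hdist_eq1 {n} (x y : cube n) : (hdist x y == 1)%N = (y \in [set flip x i | i : 'I_n]).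
Proof.
apply/idP/imsetP => [/cards1P [i xy_i] | [i _ ->]].
  exists i => //; apply/ffunP => j; rewrite ffunE.
  have /setP/(_ j) := xy_i; rewrite !inE.
  by case: (eqVneq j i) => [->|_ /negbT]; [case: (x i); case: (y i) | rewrite negbK => /eqP].
apply/cards1P; exists i; apply/setP => j; rewrite !inE ffunE.
by case: (j == i); [case: (x j) | rewrite eqxx].
Qed.

Lemma hw_le {n} (x : cube n) : (hw x <= n)%N.
Proof. by rewrite /hw -[leqRHS](card_ord n) max_card. Qed.

Lemma card_ones {n} (x : cube n) : #|[pred i | x i]| = hw x.
Proof. by apply: eq_card => i; rewrite !inE. Qed.

Lemma card_zeros {n} (x : cube n) : #|[pred i | ~~ x i]| = (n - hw x)%N.
Proof.
have := cardC [pred i | x i]; rewrite card_ones => /(congr1 (subn^~ (hw x))).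
rewrite addKn card_ord => <-.
by apply: eq_card => i; rewrite !inE.
Qed.

Lemma exists_hw {n k : nat} : (k <= n)%N -> exists x : cube n, hw x = k.
Proof.
move: k; elim=> [|k IHk] le_kn.
  exists [ffun=> false]; apply/eqP; rewrite cards_eq0; apply/eqP/setP => i.
  by rewrite !inE ffunE.
have [x hw_x] := IHk (ltnW le_kn).
have [i xi0] : exists i, ~~ x i.
  by apply/pred0Pn; rewrite -lt0n card_zeros hw_x subn_gt0.
by exists (flip x i); rewrite hw_flip (negbTE xi0) hw_x.
Qed.

Definition switches_at {n} (f : cube n -> bool) (s : nat) : Prop :=
  forall u u' : cube n, hw u = s.-1 -> hw u' = s -> f u != f u'.

Section SensitivityGraph.
Variable R : realType.
Context {n : nat} {f : cube n -> bool}.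

Lemma sens_adj_mulE (v : cube n -> R) x :
  \sum_y sens_adj R f x y * v y = \sum_(i | f x != f (flip x i)) v (flip x i).
Proof.
transitivity (\sum_(y in [set flip x i | i : 'I_n]) if f x != f y then v y else 0).
  rewrite [RHS]big_mkcond; apply: eq_bigr => y _; rewrite -hdist_eq1 /sens_adj.
  by case: (hdist x y == 1)%N; case: (f x != f y); rewrite ?mul1r ?mul0r.
by rewrite big_imset /= -?big_mkcond // => i j _ _; apply: flip_inj.
Qed.

Lemma sens_adj_mul_ge (v : cube n -> R) x (P : pred 'I_n) :
  (forall y, 0 <= v y) -> (forall i, P i -> f x != f (flip x i)) ->
  \sum_(i | P i) v (flip x i) <= \sum_y sens_adj R f x y * v y.
Proof.
move=> v_ge0 P_sens; rewrite sens_adj_mulE big_mkcond [leRHS]big_mkcond /=.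
apply: ler_sum => i _; case: (boolP (P i)) => [/P_sens -> // | _].
by case: ifP.
Qed.

Lemma switches_at_spec_sens_ge s : (0 < s <= n)%N -> switches_at f s ->
  Num.sqrt ((n - s.-1)%:R * s%:R) <= spec_sens R f.
Proof.
move=> /andP[s_gt0 le_sn] switch.
set d1 : R := (n - s.-1)%:R; set d2 : R := s%:R.
have [d1_ge0 d2_gt0] : 0 <= d1 /\ 0 < d2 by rewrite ler0n ltr0n.
have d2_ge0 := ltW d2_gt0.
pose v (y : cube n) : R :=
  if hw y == s.-1 then Num.sqrt d1 else if hw y == s then Num.sqrt d2 else 0.
have v_ge0 y : 0 <= v y by rewrite /v; do 2?case: ifP => _; rewrite ?sqrtr_ge0.
have v_s y : hw y = s -> v y = Num.sqrt d2.
  by rewrite /v => ->; rewrite eqxx ifN_eq //; lia.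
have v_s1 y : hw y = s.-1 -> v y = Num.sqrt d1 by rewrite /v => ->; rewrite eqxx.
have layer_ge x (P : pred 'I_n) c : 0 <= c ->
    (forall i, P i -> f x != f (flip x i) /\ v (flip x i) = c) ->
    (#|P|%:R * c) ^+ 2 <= (\sum_y sens_adj R f x y * v y) ^+ 2.
  move=> c_ge0 hP; have Pc_le : #|P|%:R * c <= \sum_y sens_adj R f x y * v y.
    rewrite mulr_natl -sumr_const.
    have -> : \sum_(i in P) c = \sum_(i | P i) v (flip x i).
      by apply: eq_bigr => i /hP[_ ->].
    exact: sens_adj_mul_ge v_ge0 (fun i Pi => (hP i Pi).1).
  have Pc_ge0 : 0 <= #|P|%:R * c by rewrite mulr_ge0.
  by rewrite lerXn2r // nnegrE // (le_trans Pc_ge0).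
apply: (@spectral_norm_ge R _ _ v); first exact: sqrtr_ge0.
  have [w hw_w] := exists_hw le_sn.
  rewrite (bigD1 w) //= v_s // sqr_sqrtr // ltr_wpDr //.
  by apply: sumr_ge0 => y _; rewrite sqr_ge0.
rewrite sqr_sqrtr ?mulr_ge0 // mulr_sumr; apply: ler_sum => x _.
case: (eqVneq (hw x) s.-1) => [hw_x | ne1].
  rewrite v_s1 // sqr_sqrtr //.
  apply: le_trans (layer_ge x [pred i | ~~ x i] _ (sqrtr_ge0 d2) _).
    by rewrite card_zeros hw_x -/d1 exprMn sqr_sqrtr // expr2 mulrAC.
  move=> i /negbTE xi0; have hw_flip_x : hw (flip x i) = s.
    by rewrite hw_flip xi0 hw_x prednK.
  by rewrite switch // v_s.
case: (eqVneq (hw x) s) => [hw_x | ne].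
  rewrite v_s // sqr_sqrtr //.
  apply: le_trans (layer_ge x [pred i | x i] _ (sqrtr_ge0 d1) _).
    by rewrite card_ones hw_x -/d2 exprMn sqr_sqrtr // -mulrA mulrC expr2.
  move=> i /= xi1; have hw_flip_x : hw (flip x i) = s.-1 by rewrite hw_flip xi1 hw_x.
  by rewrite eq_sym switch // v_s1.
by rewrite /v (negbTE ne1) (negbTE ne) expr0n mulr0 sqr_ge0.
Qed.

End SensitivityGraph.

Section SymmetricFunctions.
Context {n : nat} {f : cube n -> bool}.
Hypothesis f_sym : symmetric_fun f.

Lemma switches_between {a b : nat} (x y : cube n) : (a <= b <= n)%N ->
  hw x = a -> hw y = b -> f x != f y -> exists2 s, (a < s <= b)%N & switches_at f s.
Proof.
move=> + hw_x; elim: b y => [|b IHb] y /andP[le_ab le_bn] hw_y fxy.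
  by move: fxy; rewrite (f_sym x y) ?eqxx // hw_x hw_y; lia.
have lt_ab : (a < b.+1)%N.
  rewrite ltn_neqAle le_ab andbT; apply: contra fxy => /eqP ab.
  by rewrite (f_sym x y) // hw_x hw_y ab.
have [w hw_w] := exists_hw (ltnW le_bn).
case: (eqVneq (f x) (f w)) => [fxw | /IHb[| | s /andP[lt_as le_sb] switch] //].
- exists b.+1; rewrite ?lt_ab ?leqnn // => u u' hw_u hw_u'.
  by rewrite (f_sym u w) ?hw_w ?hw_u // (f_sym u' y) ?hw_u' ?hw_y // -fxw.
- by apply/andP; split; [rewrite -ltnS | exact: ltnW].
- by exists s; rewrite // lt_as leqW.
Qed.

Lemma t_f_gt0 : ~ constant_fun f -> (0 < t_f f)%N.
Proof.
rewrite /t_f; case: ex_minnP => -[|t] // mid0 _ nconst; exfalso.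
apply: nconst => x y; apply/eqP.
by move/forallP: mid0 => /(_ x)/forallP/(_ y)/implyP; apply; rewrite !subn0 !hw_le.
Qed.

Lemma t_f_double_le : (2 * t_f f <= n.+1)%N.
Proof.
rewrite /t_f; case: ex_minnP => t _ t_min.
suff : (t <= n.+1 %/ 2)%N by lia.
apply: t_min; apply/forallP => x; apply/forallP => y; apply/implyP => /andP[hx hy].
by rewrite (f_sym x y) //; lia.
Qed.

Lemma exists_switch_t_f : ~ constant_fun f ->
  exists s, [/\ (0 < s <= n)%N, switches_at f s &
                ((n - s.-1) * s = t_f f * (n.+1 - t_f f))%N].
Proof.
move=> nconst; have := t_f_double_le; have := t_f_gt0 nconst.
rewrite /t_f; case: ex_minnP => t mid_t t_min t_gt0 t_le.
have : ~~ const_on_middle f t.-1 by apply/negP => /t_min; lia.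
rewrite negb_forall => /existsP[x]; rewrite negb_forall => /existsP[y].
rewrite negb_imply => /andP[/andP[hx hy] fxy].
wlog le_xy : x y hx hy fxy / (hw x <= hw y)%N.
  move=> W; case: (leqP (hw x) (hw y)) => [|/ltnW]; first exact: W.
  by apply: W; rewrite // eq_sym.
have le_xyn : (hw x <= hw y <= n)%N by rewrite le_xy hw_le.
have [s /andP[lt_xs le_sy] switch] := switches_between x y le_xyn erefl erefl fxy.
exists s; split; [by rewrite (leq_ltn_trans _ lt_xs) // (leq_trans le_sy) ?hw_le | by [] |].
(* Layers t..n-t are where f is constant, so the switch lies at an end. *)
have [s_eq | s_eq] : s = t \/ s = (n - t).+1.
  case: (ltnP s.-1 t) => [|le_ts]; first by lia.
  case: (ltnP (n - t) s) => [|le_st]; first by lia.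
  have [u hw_u] := exists_hw (leq_trans (leq_pred s) (leq_trans le_st (leq_subr t n))).
  have [u' hw_u'] := exists_hw (leq_trans le_st (leq_subr t n)).
  have := forallP (forallP mid_t u) u'.
  rewrite (negbTE (switch u u' hw_u hw_u')) implybF hw_u hw_u' => /negP not_mid.
  by exfalso; apply: not_mid; lia.
- by rewrite s_eq mulnC; congr (_ * _)%N; lia.
- by rewrite s_eq; congr (_ * _)%N; lia.
Qed.

End SymmetricFunctions.

Lemma spec_sens_ge_t_f (R : realType) {n} {f : cube n -> bool} :
  symmetric_fun f -> ~ constant_fun f ->
  Num.sqrt ((t_f f)%:R * (n%:R + 1 - (t_f f)%:R)) <= spec_sens R f.
Proof.
move=> f_sym nconst; have [s [s_range switch prod_eq]] := exists_switch_t_f f_sym nconst.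
have t_le : (t_f f <= n.+1)%N by have := t_f_double_le f_sym; lia.
suff -> : (t_f f)%:R * (n%:R + 1 - (t_f f)%:R) = (n - s.-1)%:R * s%:R :> R.
  exact: switches_at_spec_sens_ge.
by rewrite -natrM prod_eq natrM -addn1 natrB ?natrD // addn1.
Qed.

Theorem mainTheorem3 (R : realType) :
  (forall (n : nat) (f : cube n -> bool),
     symmetric_fun f -> ~ constant_fun f ->
     Num.sqrt ((t_f f)%:R * (n%:R + 1 - (t_f f)%:R)) <= spec_sens R f)
  /\
  (exists c : R, 0 < c /\
     forall (n : nat) (f : cube n -> bool),
       symmetric_fun f -> ~ constant_fun f ->
       c * Num.sqrt ((t_f f * n)%:R) <= spec_sens R f).
Proof.
split=> [n f|]; first exact: spec_sens_ge_t_f.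
exists 2^-1; split=> [|n f f_sym nconst]; first by rewrite invr_gt0.
apply: (le_trans _ (spec_sens_ge_t_f R f_sym nconst)).
have := t_f_double_le f_sym; set t := t_f f => t_le.
have t_leR : 2 * t%:R <= n%:R + 1 :> R by rewrite -natrM -[1]/(1%:R) -natrD ler_nat addn1.
have [t_ge0 n_ge0] : 0 <= t%:R :> R /\ 0 <= n%:R :> R by rewrite !ler0n.
rewrite -[2^-1]ger0_norm ?invr_ge0 // -sqrtr_sqr -sqrtrM ?sqr_ge0 // ler_sqrt; last nra.
rewrite natrM; nra.
Qed.
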